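(* Let $p$ be an odd prime and $k,m$ positive integers, and let $n$ be a positive integer dividing $p^{km}+1$ with $\frac{p^{km}+1}{n}$ odd. Let $\mathbb{F}_p(\eta)$ be an extension of $\mathbb{F}_p$ of degree $k$, and let $\sigma$ be its Frobenius automorphism. Let $g(X)$ and $h(X,\eta)$ be coprime factors of $X^n+1$ such that: (1) $g(X)$ is a factor of $X^n+1$ over $\mathbb{F}_p$ with $g(-X)=g(X)$, and $g$ is divisible by every irreducible factor of $X^n+1$ over $\mathbb{F}_p$ whose degree is not divisible by $k$; (2) $h(X,\eta)$ is a factor of $\frac{X^n+1}{g}$ over $\mathbb{F}_p(\eta)$ with $h(-X,\eta)=h(X,\eta)$, such that for every irreducible factor $r(X,\eta)$ of $\frac{X^n+1}{g}$ over $\mathbb{F}_p(\eta)$, $r$ divides $h$ if and only if none of $\sigma^i(r)$, $i=1,\dots,k-1$, divides $h$; i.e. $\frac{X^n+1}{g}=\prod_{i=0}^{k-1}\sigma^i(h)$. Choose any nonzero $\alpha\in\mathbb{F}_p$, and let $a(X,\eta)$ be the polynomial modulo $X^n+1$ uniquely determined by the Chinese remainder theorem via $$a\equiv 1\mod g,\qquad a\equiv\sigma^i(\alpha\eta)\mod \sigma^i(h)\quad\text{for all }0\le i<k.$$ Then $a(X,\eta)$ lies in $\mathbb{F}_p[X]$ (modulo $X^n+1$), and the uniquely negacyclic subspace $S=\{(ug,\,uag): u\in\mathcal{R}\}$ of $\mathcal{R}\times\mathcal{R}\cong\mathbb{F}_p^n\times\mathbb{F}_p^n$ generated by $(g,ag)$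 is totally isotropic.
   Context: $\mathcal{R}=\mathbb{F}_p[X]/\langle X^n+1\rangle$, identified with $\mathbb{F}_p^n$ via $(a_0,\dots,a_{n-1})\mapsto\sum a_iX^i$. $\sigma$ is the Frobenius automorphism $\beta\mapsto\beta^p$ of $\mathbb{F}_p(\eta)$, extended coefficientwise to polynomials. The symplectic inner product on $\mathbb{F}_p^n\times\mathbb{F}_p^n$ is $\langle(\mathbf{a},\mathbf{b}),(\mathbf{c},\mathbf{d})\rangle_s=\mathbf{a}^T\mathbf{d}-\mathbf{b}^T\mathbf{c}$, and a subset is totally isotropic if this vanishes for all pairs of its elements. *)

From HB Require Import structures.
From mathcomp Require Import all_boot all_order all_algebra all_field.
Set Implicit Arguments. Unset Strict Implicit. Unset Printing Implicit Defensive.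
Import GRing.Theory.
Local Open Scope ring_scope.

Definition negmod (F : nzRingType) (n : nat) : {poly F} := 'X^n + 1.

Definition ncoef (F : fieldType) (n : nat) (f : {poly F}) (i : 'I_n) : F :=
  (f %% negmod F n)`_i.
Arguments ncoef {F} n f i.

Definition symp (F : fieldType) (n : nat) (x y : {poly F} * {poly F}) : F :=
  \sum_(i < n) (ncoef n x.1 i * ncoef n y.2 i - ncoef n x.2 i * ncoef n y.1 i).
Arguments symp {F} n x y.

Definition negacyclic_span (F : fieldType) (n : nat) (g b : {poly F})
  (x : {poly F} * {poly F}) : Prop :=
  exists u : {poly F}, x = ((u * g) %% negmod F n, (u * b * g) %% negmod F n).

Definition totally_isotropic (F : fieldType) (n : nat)
  (S : {poly F} * {poly F} -> Prop) : Prop :=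
  forall x y, S x -> S y -> symp n x y = 0.

Definition frobi (L : fieldType) (p i : nat) (x : L) : L := x ^+ (p ^ i).
Definition polyfrob (L : fieldType) (p i : nat) (r : {poly L}) : {poly L} :=
  map_poly (frobi p i) r.
Arguments negacyclic_span {F} n g b x.
Arguments totally_isotropic {F} n S.

From HB Require Import structures.
From mathcomp Require Import all_boot all_order all_algebra all_field.
From Stdlib Require Import Classical.
From mathcomp Require Import ring zify.
Set Implicit Arguments.
Unset Strict Implicit.
Unset Printing Implicit Defensive.
Import GRing.Theory.
Local Open Scope ring_scope.

(* Identify R = F[X]/(X^n+1) with F^n through coefficients and let J be the
   involution of R induced by X |-> X^-1 = -X^(n-1).  The coefficient dot product
   of f and h is the constant term of f J(h), so the symplectic product of
   (ug, ubg) and (vg, vbg) is the constant term of ug J(vg) (J(b) - b): S is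
   totally isotropic as soon as J(b) = b in R.
   As p does not divide n, X^n+1 is squarefree over L = F_p(eta), and by the orbit
   condition each of its irreducible factors divides g or some sigma^i(h), so
   congruences modulo X^n+1 may be checked modulo g and the sigma^i(h).  There a
   is the constant 1 or sigma^i(alpha eta); this gives a(-X) = a (g and h are
   even), a^N = a for N = p^(km) (as |L| = p^k), and sigma(a) = a (sigma permutes
   the congruences cyclically), which puts a in F_p[X].  For b in F_p[X] the
   Frobenius gives b(-X)^N = b((-X)^N), and (-X)^N = X^-1 in R because
   N + 1 = nq with q odd; hence J(b) = b(-X)^N = b^N = b. *)

Section PolyDivisibility.
Variable F : fieldType.
Implicit Types P G q r s u w : {poly F}.

Lemma irredp_factor q : (1 < size q)%N -> exists2 r, irreducible_poly r & r %| q.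
Proof.
have [N] := ubnP (size q); elim: N q => // N IH q; rewrite ltnS => le_qN q_gt1.
have [irr_q | red_q] := classic (irreducible_poly q); first by exists q.
have [s [s_neq1 s_dvd_q s_neqp]] : exists s, [/\ size s != 1%N, s %| q & ~~ (s %= q)].
  apply: NNPP => no_s; apply: red_q; split=> // s s_neq1 s_dvd_q.
  by apply/negPn/negP => s_neqp; apply: no_s; exists s.
have s_neq0 : s != 0 by apply: contraTneq s_dvd_q => ->; rewrite dvd0p -size_poly_gt0 ltnW.
have lt_sq : (size s < size q)%N.
  by rewrite ltn_neqAle (dvdp_size_eqp s_dvd_q) s_neqp dvdp_leq // -size_poly_gt0 ltnW.
have s_gt1 : (1 < size s)%N by rewrite ltn_neqAle eq_sym s_neq1 size_poly_gt0.
have [r irr_r r_dvd_s] := IH s (leq_trans lt_sq le_qN) s_gt1.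
by exists r; last exact: dvdp_trans r_dvd_s s_dvd_q.
Qed.

(* If P = (P / d) d with d = gcd(P, G) and P / d were not constant, an irreducible
   factor of P / d would divide d as well, so its square would divide P. *)
Lemma separable_dvdp P G : separable_poly P ->
  (forall r, irreducible_poly r -> r %| P -> r %| G) -> P %| G.
Proof.
move=> sepP irr_dvd; set d := gcdp P G.
have P_neq0 := separable_poly_neq0 sepP.
have d_dvd_P : d %| P by rewrite dvdp_gcdl.
have defP : P %/ d * d = P by rewrite divpK.
have [le_1 | gt_1] := leqP (size (P %/ d)) 1.
  have unitPd : P %/ d %= 1.
    rewrite -size_poly_eq1 eqn_leq le_1 size_poly_gt0.
    by apply: contra_neq P_neq0 => Pd0; rewrite -defP Pd0 mul0r.
  by rewrite -defP (eqp_dvdl _ (eqp_mulr _ unitPd)) mul1r dvdp_gcdr.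
have [r irr_r r_dvd_Pd] := irredp_factor gt_1.
have r_dvd_P : r %| P := dvdp_trans r_dvd_Pd (divp_dvd d_dvd_P).
have r_dvd_d : r %| d by rewrite dvdp_gcd r_dvd_P irr_dvd.
suff : coprimep r r by rewrite coprimepp gtn_eqF //; case: irr_r.
by apply: (separable_coprime sepP); rewrite -defP dvdp_mul.
Qed.

Lemma polyC_sign j : ((-1) ^+ j)%:P = (-1) ^+ j :> {poly F}.
Proof. by rewrite rmorphXn rmorphN1. Qed.

Lemma modp_congr P u w : P %| u - w -> u %% P = w %% P.
Proof. by move=> /modp_eq0; rewrite modpD modpN => /eqP; rewrite subr_eq0 => /eqP. Qed.

Lemma dvdp_sub_modp P u : P %| u - u %% P.
Proof. by rewrite {1}(divp_eq u P) addrK dvdp_mull. Qed.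

Lemma dvdp_exprB P u w N : P %| u - w -> P %| u ^+ N - w ^+ N.
Proof. by move=> dvd_uw; rewrite subrXX dvdp_mulr. Qed.

Lemma dvdp_compB P q u w : P %| u - w -> P %| (q \Po u) - (q \Po w).
Proof.
move=> dvd_uw; elim/poly_ind: q => [|q c IH]; first by rewrite !comp_poly0 subrr dvdp0.
have -> : ((q * 'X + c%:P) \Po u) - ((q * 'X + c%:P) \Po w)
    = ((q \Po u) - (q \Po w)) * u + (q \Po w) * (u - w).
  by rewrite !comp_poly_MXaddC; ring.
by apply: dvdp_add; [apply: dvdp_mulr | apply: dvdp_mull].
Qed.

Lemma dvdp_subC_trans d u w c : d %| u - c%:P -> d %| w - c%:P -> d %| u - w.
Proof.
move=> du dw; have -> : u - w = (u - c%:P) - (w - c%:P) by ring.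
exact: dvdp_sub.
Qed.

Lemma dvdp_subC_compNX d u c : d \Po - 'X = d -> d %| u - c%:P -> d %| (u \Po - 'X) - u.
Proof.
move=> d_even d_dvd; have -> : (u \Po - 'X) - u = ((u - c%:P) \Po - 'X) - (u - c%:P).
  by rewrite comp_polyB comp_polyC; ring.
by apply: dvdp_sub => //; rewrite -d_even dvdp_comp_poly.
Qed.

Lemma dvdp_subC_expr d u c N : c ^+ N = c -> d %| u - c%:P -> d %| u ^+ N - u.
Proof.
move=> c_fixed d_dvd; have -> : u ^+ N - u = (u ^+ N - c%:P ^+ N) - (u - c%:P).
  by rewrite -rmorphXn c_fixed; ring.
by apply: dvdp_sub => //; apply: dvdp_exprB.
Qed.

End PolyDivisibility.

Lemma map_comp_polyNX {F K : fieldType} (f : {rmorphism F -> K}) q :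
  q \Po - 'X = q -> map_poly f q \Po - 'X = map_poly f q.
Proof. by move=> q_even; rewrite -{2}q_even map_comp_poly rmorphN /= map_polyX. Qed.

Lemma map_negmod {F K : fieldType} (f : {rmorphism F -> K}) n :
  map_poly f (negmod F n) = negmod K n.
Proof. by rewrite /negmod rmorphD /= map_polyXn rmorph1. Qed.

Section Negacyclic.
Variables (F : fieldType) (n : nat).
Hypothesis n_gt0 : (0 < n)%N.
Local Notation P := (negmod F n).
Implicit Types f h q : {poly F}.

Lemma size_negmod : size P = n.+1.
Proof. by rewrite /negmod size_polyDl ?size_polyXn ?size_polyC ?oner_eq0. Qed.

Lemma negmod_neq0 : P != 0.
Proof. by rewrite -size_poly_gt0 size_negmod. Qed.

Lemma Xn_modp_negmod m : 'X^m %% P = (-1) ^+ (m %/ n) *: 'X^(m %% n).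
Proof.
rewrite (@modp_congr _ _ _ ((-1) ^+ (m %/ n) *: 'X^(m %% n))); last first.
  rewrite {1}(divn_eq m n) exprD mulnC exprM -mul_polyC -mulrBl dvdp_mulr //.
  rewrite polyC_sign; apply: dvdp_exprB.
  by rewrite opprK.
by rewrite modp_small // size_scale ?signr_eq0 // size_polyXn size_negmod ltnS ltn_pmod.
Qed.

Lemma separable_negmod : n%:R != 0 :> F -> separable_poly P.
Proof.
move=> n_neq0; rewrite unlock /negmod derivD derivC addr0 derivXn.
apply/Bezout_coprimepP; exists (1, - (n%:R^-1 *: 'X)) => /=.
have -> : - (n%:R^-1 *: 'X) * ('X^(n.-1) *+ n) = - 'X^n :> {poly F}.
  rewrite mulNr -scalerAl -scaler_nat -scalerAr scalerA mulVf // scale1r.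
  by rewrite -exprS prednK.
by rewrite mul1r addrC addKr eqpxx.
Qed.

Definition nconst f : F := (f %% P)`_0.

Fact nconst_is_nmod_morphism : nmod_morphism nconst.
Proof. by split=> [|f h]; rewrite /nconst ?mod0p ?coef0 // modpD coefD. Qed.
HB.instance Definition _ :=
  GRing.isNmodMorphism.Build {poly F} F nconst nconst_is_nmod_morphism.

Fact nconst_is_scalable : scalable_for *%R nconst.
Proof. by move=> c f; rewrite /nconst modpZl coefZ. Qed.
HB.instance Definition _ :=
  GRing.isScalable.Build F {poly F} F *%R nconst nconst_is_scalable.

Lemma nconst_dvdp f : P %| f -> nconst f = 0.
Proof. by move=> /modp_eq0 f0; rewrite /nconst f0 coef0. Qed.

Lemma nconst_congr f h : P %| f - h -> nconst f = nconst h.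
Proof. by move=> /modp_congr fh; rewrite /nconst fh. Qed.

Definition nconj : {poly F} -> {poly F} := comp_poly (- 'X^(n.-1)).

Lemma nconst_mulXn_nconjXn i j : (i < n)%N -> (j < n)%N ->
  nconst ('X^i * nconj 'X^j) = (i == j)%:R.
Proof.
move=> lt_in lt_jn; rewrite /nconj rmorphXn /= comp_polyX exprNn -exprM mulrCA -exprD.
rewrite -polyC_sign mul_polyC linearZ /=.
rewrite /nconst Xn_modp_negmod coefZ coefXn.
have [<- | ne_ij] := eqVneq i j.
  have -> : (i + n.-1 * i = i * n)%N by rewrite -mulSn prednK // mulnC.
  by rewrite mulnK // modnMl eqxx mulr1 -exprMn mulrNN mulr1 expr1n.
set m := (i + _)%N.
have m_j : (m + j = i + j * n)%N by rewrite /m -addnA -mulSnr prednK // mulnC.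
suff /negPf -> : (0 != m %% n)%N by rewrite !mulr0.
apply: contra ne_ij => /eqP m_mod; apply/eqP.
have := congr1 (modn^~ n) m_j; rewrite -modnDml -m_mod add0n addnC modnMDl.
by rewrite !modn_small.
Qed.

Lemma negmod_dvd_nconj : P %| nconj P.
Proof.
rewrite /nconj {2}/negmod rmorphD rmorph1 rmorphXn /= comp_polyX exprNn -exprM.
rewrite -polyC_sign mul_polyC.
rewrite /dvdp modpD modpZl Xn_modp_negmod mulnK // modnMl expr0.
rewrite (modp_small (p := 1)) ?size_polyC ?oner_eq0 ?size_negmod // scalerA -exprD.
by rewrite -{1}(prednK n_gt0) addSn addnn exprS -signr_odd odd_double mulr1 scaleN1r addNr.
Qed.

Lemma nconj_congr f h : P %| f - h -> P %| nconj f - nconj h.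
Proof. by case/dvdpP=> t fh; rewrite /nconj -rmorphB fh rmorphM dvdp_mull // negmod_dvd_nconj. Qed.

Lemma dot_coef_nconst f h :
  \sum_(i < n) (f %% P)`_i * (h %% P)`_i = nconst (f * nconj h).
Proof.
have -> : nconst (f * nconj h) = nconst ((f %% P) * nconj (h %% P)).
  apply: nconst_congr.
  have -> : f * nconj h - (f %% P) * nconj (h %% P)
      = (f - f %% P) * nconj h + (f %% P) * (nconj h - nconj (h %% P)) by ring.
  apply: dvdp_add; first by apply: dvdp_mulr; apply: dvdp_sub_modp.
  by apply: dvdp_mull; apply: nconj_congr; apply: dvdp_sub_modp.
have size_mod q : (size (q %% P)%R <= n)%N.
  by rewrite -ltnS -size_negmod ltn_modp negmod_neq0.
rewrite -[in RHS](take_poly_id (size_mod f)) -[in RHS](take_poly_id (size_mod h)).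
rewrite /take_poly !poly_def /nconj rmorph_sum mulr_suml linear_sum; apply: eq_bigr => i _.
rewrite mulr_sumr linear_sum (bigD1 i) //= big1 ?addr0 => [|j ne_ji].
  by rewrite linearZ -scalerAl -scalerAr !linearZ /= nconst_mulXn_nconjXn // eqxx mulr1.
have /negPf ne_ij : (i : nat) != j by rewrite eq_sym.
by rewrite linearZ -scalerAl -scalerAr !linearZ /= nconst_mulXn_nconjXn // ne_ij !mulr0.
Qed.

Lemma negacyclic_span_isotropic g b :
  P %| nconj b - b -> totally_isotropic n (negacyclic_span n g b).
Proof.
move=> b_fixed x y [u ->] [v ->].
rewrite /symp /ncoef /= !modp_id sumrB !dot_coef_nconst -raddfB /=.
apply: nconst_dvdp.
have -> : u * g * nconj (v * b * g) - u * b * g * nconj (v * g)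
    = u * g * nconj v * nconj g * (nconj b - b) by rewrite /nconj !rmorphM; ring.
exact: dvdp_mull.
Qed.

End Negacyclic.
Arguments nconst {F} n f.
Arguments nconj {F} n.

Section PrimeField.
Variable p : nat.
Hypothesis pr_p : prime p.

Lemma Fp_expn_pow (c : 'F_p) j : c ^+ (p ^ j) = c.
Proof.
elim: j => [|j IH]; first by rewrite expr1.
by rewrite expnSr exprM IH; have := expf_card c; rewrite card_Fp.
Qed.

Lemma comp_poly_expn_pow (q w : {poly 'F_p}) j :
  (q \Po w) ^+ (p ^ j) = q \Po w ^+ (p ^ j).
Proof.
have pchar_p : p \in [pchar {poly 'F_p}] by rewrite pchar_poly pchar_Fp.
have pchar_nat : [pchar {poly 'F_p}].-nat (p ^ j)%N.
  by rewrite (eq_pnat _ (pcharf_eq pchar_p)) pnatX pnat_id.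
elim/poly_ind: q => [|q c IH].
  by rewrite !comp_poly0 expr0n expn_eq0 eqn0Ngt prime_gt0.
rewrite !comp_poly_MXaddC (exprDn_pchar _ _ pchar_nat) exprMn IH.
by rewrite -rmorphXn Fp_expn_pow.
Qed.

Lemma nconj_fixed_Fp n j (b : {poly 'F_p}) :
    (0 < n)%N -> odd p -> (n %| p ^ j + 1)%N -> odd ((p ^ j + 1) %/ n) ->
    negmod 'F_p n %| (b \Po - 'X) - b -> negmod 'F_p n %| b ^+ (p ^ j) - b ->
  negmod 'F_p n %| nconj n b - b.
Proof.
move=> n_gt0 odd_p n_dvd odd_q b_even b_pow.
have odd_N : odd (p ^ j) by rewrite oddX odd_p orbT.
have def_N : (p ^ j = n.-1 + n * ((p ^ j + 1) %/ n)./2.*2)%N.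
  move: (divnK n_dvd); rewrite -{1}(odd_double_half ((p ^ j + 1) %/ n)) odd_q.
  by rewrite -!muln2; lia.
have X_N : negmod 'F_p n %| 'X^(p ^ j) - 'X^(n.-1).
  rewrite {1}def_N exprD exprM -{2}['X^(n.-1)]mulr1 -mulrBr dvdp_mull //.
  have -> : 1 = (-1) ^+ ((p ^ j + 1) %/ n)./2.*2 :> {poly 'F_p}.
    by rewrite -signr_odd odd_double.
  by apply: dvdp_exprB; rewrite opprK.
have -> : nconj n b - b = ((b \Po - 'X^(n.-1)) - (b \Po (- 'X) ^+ (p ^ j)))
    + ((b \Po - 'X) ^+ (p ^ j) - b ^+ (p ^ j)) + (b ^+ (p ^ j) - b).
  by rewrite /nconj comp_poly_expn_pow; ring.
apply: dvdp_add; last exact: b_pow.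
apply: dvdp_add; last exact: dvdp_exprB b_even.
apply: dvdp_compB.
by rewrite exprNn -signr_odd odd_N expr1 mulN1r opprK addrC.
Qed.

End PrimeField.

Section Frobenius.
Variables (p : nat) (L : fieldExtType 'F_p).
Hypothesis pr_p : prime p.
Local Notation k := (\dim {: L}).
Implicit Types (x : L) (r : {poly L}).

Lemma pchar_L : p \in [pchar L].
Proof. by rewrite (pchar_lalg L) pchar_Fp. Qed.

Fact frobi_is_nmod_morphism i : nmod_morphism (frobi p i : L -> L).
Proof.
have pchar_nat : [pchar L].-nat (p ^ i)%N.
  by rewrite (eq_pnat _ (pcharf_eq pchar_L)) pnatX pnat_id.
split=> [|x y]; last exact: exprDn_pchar.
by rewrite /frobi expr0n expn_eq0 eqn0Ngt prime_gt0.
Qed.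
HB.instance Definition _ i :=
  GRing.isNmodMorphism.Build L L (frobi p i) (frobi_is_nmod_morphism i).

Fact frobi_is_monoid_morphism i : monoid_morphism (frobi p i : L -> L).
Proof. by split=> [|x y]; rewrite /frobi ?expr1n // exprMn. Qed.
HB.instance Definition _ i :=
  GRing.isMonoidMorphism.Build L L (frobi p i) (frobi_is_monoid_morphism i).

Lemma frobi0 x : frobi p 0 x = x.
Proof. by rewrite /frobi expn0 expr1. Qed.

Lemma frobiD i j x : frobi p i (frobi p j x) = frobi p (j + i) x.
Proof. by rewrite /frobi -exprM expnD. Qed.

Lemma frobi_dim x : frobi p k x = x.
Proof.
by have := Fermat's_little_theorem {: L}%AS x; rewrite memvf card_Fp // => /esym/eqP.
Qed.

Lemma expf_dim_pow x m : x ^+ (p ^ (k * m)) = x.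
Proof.
elim: m => [|m IH]; first by rewrite muln0 expr1.
by rewrite mulnS expnD exprM; have := frobi_dim x; rewrite /frobi => ->.
Qed.

Lemma frobi_in_alg i (t : 'F_p) : frobi p i (in_alg L t) = in_alg L t.
Proof. by rewrite /frobi -rmorphXn Fp_expn_pow. Qed.

Lemma mem1v_frobenius x : x ^+ p = x -> x \in 1%VS.
Proof.
by move=> x_fixed; rewrite Fermat's_little_theorem dimv1 expn1 card_Fp // x_fixed.
Qed.

Lemma polyfrob0 r : polyfrob p 0 r = r.
Proof. by rewrite /polyfrob (eq_map_poly frobi0) map_poly_id. Qed.

Lemma polyfrob_dim r : polyfrob p k r = r.
Proof. by rewrite /polyfrob (eq_map_poly frobi_dim) map_poly_id. Qed.

Lemma polyfrobD i j r : polyfrob p i (polyfrob p j r) = polyfrob p (j + i) r.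
Proof. by rewrite /polyfrob -map_poly_comp; apply: eq_map_poly => x /=; rewrite frobiD. Qed.

Lemma polyfrob_in_alg i (q : {poly 'F_p}) :
  polyfrob p i (map_poly (in_alg L) q) = map_poly (in_alg L) q.
Proof.
by rewrite /polyfrob -map_poly_comp; apply: eq_map_poly => t /=; rewrite frobi_in_alg.
Qed.

Lemma polyfrob_dvdp_subC i d r c :
  d %| r - c%:P -> polyfrob p i d %| polyfrob p i r - (frobi p i c)%:P.
Proof. by rewrite /polyfrob -map_polyC -rmorphB dvdp_map. Qed.

Section NegacyclicCRT.
Variables (n : nat) (g : {poly 'F_p}) (h : {poly L}).
Hypotheses (n_gt0 : (0 < n)%N) (p_ndvd_n : ~~ (p %| n)%N).
Local Notation gL := (map_poly (in_alg L) g).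
Local Notation PL := (negmod L n).
Hypothesis g_dvd : g %| negmod 'F_p n.
Hypothesis h_dvd : h %| PL %/ gL.
Hypothesis h_orbit : forall r, irreducible_poly r -> r %| PL %/ gL ->
  (forall i, (0 < i < k)%N -> ~~ (polyfrob p i r %| h)) -> r %| h.

Lemma gL_dvd_negmod : gL %| PL.
Proof. by rewrite -(map_negmod (in_alg L)) dvdp_map. Qed.

Lemma irreducible_dvdp_negmod r : irreducible_poly r -> r %| PL ->
  r %| gL \/ exists2 i, (i < k)%N & r %| polyfrob p i h.
Proof.
move=> irr_r; rewrite -(divpK gL_dvd_negmod) => r_dvd.
have [r_dvd_g | r_ndvd_g] := boolP (r %| gL); [by left | right].
move: r_dvd; rewrite Gauss_dvdpl ?irreducible_poly_coprime // => r_dvd.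
have [r_dvd_h | r_ndvd_h] := boolP (r %| h).
  by exists 0%N; rewrite ?polyfrob0 ?adim_gt0.
have [i /andP [i_gt0 i_lt_k] ri_dvd_h] : exists2 i, (0 < i < k)%N & polyfrob p i r %| h.
  apply: NNPP => no_i; apply: (negP r_ndvd_h); apply: h_orbit => // i i_range.
  by apply/negP => ri_dvd_h; apply: no_i; exists i.
exists (k - i)%N; first by rewrite ltn_subrL i_gt0 adim_gt0.
have : polyfrob p (k - i) (polyfrob p i r) %| polyfrob p (k - i) h.
  by rewrite /polyfrob dvdp_map.
by rewrite polyfrobD subnKC ?polyfrob_dim // ltnW.
Qed.

Lemma negmod_dvdp_crt G : gL %| G ->
  (forall i, (i < k)%N -> polyfrob p i h %| G) -> PL %| G.
Proof.
move=> g_dvd_G h_dvd_G; apply: separable_dvdp => [|r irr_r r_dvd].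
  by apply: separable_negmod => //; rewrite -(dvdn_pcharf pchar_L).
case: (irreducible_dvdp_negmod irr_r r_dvd) => [r_dvd_g | [i i_lt_k r_dvd_h]].
  exact: dvdp_trans r_dvd_g g_dvd_G.
exact: dvdp_trans r_dvd_h (h_dvd_G i i_lt_k).
Qed.

Definition crt_solution (c : L) (a : {poly L}) :=
  gL %| a - 1 /\ forall i, (i < k)%N -> polyfrob p i h %| a - (frobi p i c)%:P.

Lemma crt_solution_congr c a b : crt_solution c a -> PL %| a - b -> crt_solution c b.
Proof.
move=> [a_g a_h] a_b; have sub_b (x : {poly L}) : b - x = (a - x) - (a - b) by ring.
have hi_dvd_PL i : polyfrob p i h %| PL.
  rewrite -(map_negmod (frobi p i)) /polyfrob dvdp_map.
  exact: dvdp_trans h_dvd (divp_dvd gL_dvd_negmod).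
split=> [|i i_lt_k]; rewrite sub_b; apply: dvdp_sub.
- exact: a_g.
- exact: dvdp_trans gL_dvd_negmod a_b.
- exact: a_h.
- exact: dvdp_trans (hi_dvd_PL i) a_b.
Qed.

Lemma crt_solution_even c a : g \Po - 'X = g -> h \Po - 'X = h ->
  crt_solution c a -> PL %| (a \Po - 'X) - a.
Proof.
move=> g_even h_even [a_g a_h]; apply: negmod_dvdp_crt => [|i i_lt_k].
  by apply: (dvdp_subC_compNX (c := 1)); rewrite ?polyC1 // map_comp_polyNX.
by apply: dvdp_subC_compNX (a_h i i_lt_k); rewrite map_comp_polyNX.
Qed.

Lemma crt_solution_exp_pow c a m : crt_solution c a -> PL %| a ^+ (p ^ (k * m)) - a.
Proof.
move=> [a_g a_h]; apply: negmod_dvdp_crt => [|i i_lt_k].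
  by apply: (dvdp_subC_expr (c := 1)); rewrite ?polyC1 ?expr1n.
by apply: dvdp_subC_expr (a_h i i_lt_k); rewrite expf_dim_pow.
Qed.

Lemma crt_solution_frob c a : crt_solution c a -> PL %| polyfrob p 1 a - a.
Proof.
move=> [a_g a_h]; apply: negmod_dvdp_crt => [|i i_lt_k].
  rewrite -polyC1 in a_g; have := polyfrob_dvdp_subC 1 a_g.
  by rewrite polyfrob_in_alg rmorph1 => /dvdp_subC_trans; apply.
have [j j_lt_k [hj cj]] : exists2 j, (j < k)%N &
    polyfrob p 1 (polyfrob p j h) = polyfrob p i h /\ frobi p 1 (frobi p j c) = frobi p i c.
  case: i i_lt_k => [|i] i_lt_k; last first.
    by exists i; [exact: ltnW | rewrite polyfrobD frobiD addn1].
  exists k.-1; first by rewrite ltn_predL adim_gt0.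
  rewrite polyfrobD frobiD addn1 prednK ?adim_gt0 //.
  by rewrite polyfrob_dim frobi_dim polyfrob0 frobi0.
have := polyfrob_dvdp_subC 1 (a_h j j_lt_k).
by rewrite hj cj => /dvdp_subC_trans; apply; apply: a_h.
Qed.

Lemma crt_solution_rational c a : crt_solution c a ->
  exists b : {poly 'F_p}, PL %| a - map_poly (in_alg L) b.
Proof.
move=> a_crt; have frob_a : polyfrob p 1 (a %% PL) = a %% PL.
  rewrite /polyfrob map_modp map_negmod; apply: modp_congr.
  exact: crt_solution_frob a_crt.
have [b def_b] : exists b, a %% PL = map_poly (in_alg L) b.
  apply/polyOver1P/polyOverP => i; apply: mem1v_frobenius.
  by have := congr1 (coefp i) frob_a; rewrite /= /polyfrob coef_map /= /frobi expn1.
by exists b; rewrite -def_b dvdp_sub_modp.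
Qed.

End NegacyclicCRT.

End Frobenius.

Theorem mainTheorem10
  (p k m n : nat)
  (pr_p : prime p) (odd_p : odd p) (k_gt0 : (0 < k)%N) (m_gt0 : (0 < m)%N)
  (n_gt0 : (0 < n)%N)
  (n_dvd : (n %| p ^ (k * m) + 1)%N) (odd_quot : odd ((p ^ (k * m) + 1) %/ n))
  (L : fieldExtType 'F_p) (dimL : \dim {: L} = k)
  (eta : L) (gen_eta : <<1; eta>>%VS = fullv)
  (g : {poly 'F_p}) (h : {poly L})
  (g_dvd : g %| negmod 'F_p n)
  (g_even : g \Po (- 'X) = g)
  (g_small : forall r : {poly 'F_p}, irreducible_poly r -> r %| negmod 'F_p n ->
       ~~ (k %| (size r).-1)%N -> r %| g)
  (h_dvd : h %| negmod L n %/ map_poly (in_alg L) g)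
  (h_even : h \Po (- 'X) = h)
  (h_orbit : forall r : {poly L}, irreducible_poly r ->
       r %| negmod L n %/ map_poly (in_alg L) g ->
       (r %| h <-> (forall i : nat, (0 < i < k)%N -> ~~ (polyfrob p i r %| h))))
  (gh_coprime : coprimep (map_poly (in_alg L) g) h)
  (alpha : 'F_p) (alpha_nz : alpha != 0)
  (a : {poly L})
  (a_g : map_poly (in_alg L) g %| a - 1)
  (a_h : forall i : nat, (i < k)%N ->
       polyfrob p i h %| a - (frobi p i (in_alg L alpha * eta))%:P) :
  (exists b : {poly 'F_p}, negmod L n %| a - map_poly (in_alg L) b) /\
  (forall b : {poly 'F_p}, negmod L n %| a - map_poly (in_alg L) b ->
     totally_isotropic n (negacyclic_span n g b)).
Proof.
subst k.
have p_ndvd_n : ~~ (p %| n)%N.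
  apply/negP => /dvdn_trans /(_ n_dvd); rewrite dvdn_addr; last first.
    by apply: dvdn_exp; rewrite ?muln_gt0 ?k_gt0.
  by rewrite dvdn1 => /eqP p1; rewrite p1 in pr_p.
have h_orbit_dvd r irr_r r_dvd := (h_orbit r irr_r r_dvd).2.
have a_crt : crt_solution g h (in_alg L alpha * eta) a by [].
split; first exact: (crt_solution_rational pr_p n_gt0 p_ndvd_n g_dvd h_orbit_dvd a_crt).
move=> b a_b; apply: negacyclic_span_isotropic => //.
have b_crt := crt_solution_congr pr_p g_dvd h_dvd a_crt a_b.
apply: (nconj_fixed_Fp pr_p n_gt0 odd_p n_dvd odd_quot).
  rewrite -(dvdp_map (in_alg L)) map_negmod rmorphB /= map_comp_poly rmorphN /= map_polyX.
  exact: (crt_solution_even pr_p n_gt0 p_ndvd_n g_dvd h_orbit_dvd g_even h_even b_crt).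
rewrite -(dvdp_map (in_alg L)) map_negmod rmorphB rmorphXn /=.
exact: (crt_solution_exp_pow pr_p n_gt0 p_ndvd_n g_dvd h_orbit_dvd m b_crt).
Qed.
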